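(* Let $K$ be a number field. Let $\mathcal C_K$ be the set of compositum feasible triplets over $K$ and let $\mathcal C'_K$ be the set of triplets of positive integers $(a,b,c)$ with $c=\mathrm{lcm}(a,b)\cdot t$ for some positive integer $t\mid\gcd(a,b)$. (1) If $(a,b,c),(a',b',c')\in\mathcal C_K$ and $(a,b,c)\in\mathcal C'_K$, then $(aa',bb',cc')\in\mathcal C_K$. (2) $\mathcal C'_K\subseteq\mathcal C_K$, and $\mathcal C'_K$ is a commutative monoid under componentwise multiplication (with identity $(1,1,1)$). In particular, if $(a,b,c)\in\mathcal C'_K$ then $(a^n,b^n,c^n)\in\mathcal C'_K$ for every $n\in\mathbb N$.
   Context: Extensions are finite and inside a fixed algebraic closure $\bar K$. A triplet $(a,b,c)$ of positive integers is compositum feasible over $K$ if there exist extensions $L/K$, $L'/K$ of degrees $a$ and $b$ whose compositum $LL'$ has degree $c$ over $K$. *)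

From HB Require Import structures.
From mathcomp Require Import all_boot all_order all_algebra all_field.
Set Implicit Arguments. Unset Strict Implicit. Unset Printing Implicit Defensive.
Import GRing.Theory.

Notation numberField := (fieldExtType rat).

(* (a,b,c) is compositum feasible over K: there are finite extensions L, L'
   of K (inside a common finite extension E of K, equivalently inside a fixed
   algebraic closure) with [L:K] = a, [L':K] = b and [LL':K] = c. *)
Definition compositum_feasible (K : fieldType) (a b c : nat) : Prop :=
  exists (E : fieldExtType K) (L L' : {subfield E}),
    [/\ \dim L = a, \dim L' = b & \dim (L * L')%AS = c].

Definition Cprime (a b c : nat) : Prop :=
  [/\ 0 < a, 0 < b, 0 < c &
      exists t : nat, [/\ 0 < t, t %| gcdn a b & c = lcmn a b * t]]%N.

(* Write (a, b, c) in C'_K as (s a1, s b1, s a1 b1).  Given L, L' inside E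
   witnessing (a', b', c'), adjoin to E, one after the other, q-th roots
   p^(1/q) of rational primes p, one for each prime factor q (counted with
   multiplicity) of s, a1 and b1, each of degree q over every subfield of the
   field built so far.  Then L(roots for s and a1) and L'(roots for s and b1)
   have degrees s a1 a' and s b1 b', and their compositum is (LL')(all roots),
   of degree s a1 b1 c'.  Such roots exist by Kummer theory: over E(z), z a
   primitive q-th root of unity, X^q - p is irreducible as soon as p is not a
   q-th power in E(z); and if every prime were a q-th power in E(z), adjoining
   q-th roots of larger and larger primes to Q(z) would produce subfields of
   E(z) of unbounded degree.  Part (2) is the case (a', b', c') = (1, 1, 1). *)

From HB Require Import structures.
From mathcomp Require Import all_boot all_order all_algebra all_field.
From mathcomp Require Import ring.
From Stdlib Require Import Classical.
Set Implicit Arguments. Unset Strict Implicit. Unset Printing Implicit Defensive.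
Import GRing.Theory Num.Theory.

Lemma exists_prime_seq_prod n : 0 < n -> exists2 qs, all prime qs & \prod_(q <- qs) q = n.
Proof.
move=> n_gt0; exists (flatten [seq nseq f.2 f.1 | f <- prime_decomp n]).
  apply/allP => p /flattenP[_ /mapP[[r e] r_n ->]] /nseqP[-> _].
  by case/mem_prime_decomp: r_n.
rewrite big_flatten big_map [RHS](prod_prime_decomp n_gt0).
by apply: eq_bigr => f _; rewrite big_nseq iter_muln_1.
Qed.

Lemma CprimeP a b c : Cprime a b c <-> exists s a1 b1,
  [/\ 0 < s, 0 < a1 & 0 < b1] /\ [/\ a = s * a1, b = s * b1 & c = s * a1 * b1].
Proof.
split=> [[a_gt0 b_gt0 _ [t [t_gt0 t_dvd ->]]] | [s [a1 [b1 [[s_gt0 a1_gt0 b1_gt0] [-> -> ->]]]]]].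
  have [s Dg] := dvdnP t_dvd.
  have s_gt0 : 0 < s by move: (gcdn_gt0 a b); rewrite a_gt0 Dg muln_gt0 => /andP[].
  have s_dvd x : gcdn a b %| x -> s %| x by rewrite Dg; apply: dvdn_trans (dvdn_mulr t _).
  have [a1 Da] := dvdnP (s_dvd _ (dvdn_gcdl a b)).
  have [b1 Db] := dvdnP (s_dvd _ (dvdn_gcdr a b)).
  rewrite mulnC in Da; rewrite mulnC in Db.
  have Dt : t = gcdn a1 b1 by apply/eqP; rewrite -(eqn_pmul2l s_gt0) -Dg Da Db muln_gcdr.
  exists s, a1, b1; split; last by rewrite Dt Da Db -muln_lcmr -mulnA muln_lcm_gcd mulnA.
  by split=> //; [move: a_gt0 | move: b_gt0]; rewrite ?Da ?Db muln_gt0 => /andP[].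
split; rewrite ?muln_gt0 ?s_gt0 ?a1_gt0 ?b1_gt0 //.
exists (gcdn a1 b1); split; first by rewrite gcdn_gt0 a1_gt0.
  by rewrite -muln_gcdr dvdn_mull.
by rewrite -muln_lcmr -[RHS]mulnA muln_lcm_gcd mulnA.
Qed.

Lemma Cprime111 : Cprime 1 1 1.
Proof. by apply/CprimeP; exists 1, 1, 1. Qed.

Lemma CprimeM a b c a' b' c' :
  Cprime a b c -> Cprime a' b' c' -> Cprime (a * a') (b * b') (c * c').
Proof.
case/CprimeP=> s [a1 [b1 [[s_gt0 a1_gt0 b1_gt0] [-> -> ->]]]].
case/CprimeP=> s' [a1' [b1' [[s'_gt0 a1'_gt0 b1'_gt0] [-> -> ->]]]].
apply/CprimeP; exists (s * s'), (a1 * a1'), (b1 * b1'); rewrite !muln_gt0 s_gt0 s'_gt0.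
by rewrite a1_gt0 a1'_gt0 b1_gt0 b1'_gt0; split; split=> //; ring.
Qed.

Lemma CprimeX a b c n : Cprime a b c -> Cprime (a ^ n) (b ^ n) (c ^ n).
Proof.
move=> Cabc; elim: n => [|n IHn]; first exact: Cprime111.
by rewrite !expnS; apply: CprimeM.
Qed.

Section Kummer.
Local Open Scope ring_scope.
Variables (F0 : fieldType) (L : fieldExtType F0).
Implicit Types (F : {subfield L}) (w u : L).

Lemma minPoly_dvdp_XnsubC F w n : w ^+ n \in F -> minPoly F w %| 'X^n - (w ^+ n)%:P.
Proof.
move=> wnF; apply: minPoly_dvdp; first by rewrite rpredB ?rpredX ?polyOverX ?polyOverC.
by rewrite rootE !hornerE subrr.
Qed.

Lemma adjoin_degree_leq_exp F w n : (0 < n)%N -> w ^+ n \in F ->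
  (adjoin_degree F w <= n)%N.
Proof.
move=> n_gt0 /minPoly_dvdp_XnsubC/dvdp_leq.
rewrite size_minPoly size_XnsubC // ltnS; apply.
by rewrite -size_poly_eq0 size_XnsubC.
Qed.

Lemma minPoly_XnsubC F w n : (0 < n)%N -> w ^+ n \in F ->
  adjoin_degree F w = n -> minPoly F w = 'X^n - (w ^+ n)%:P.
Proof.
move=> n_gt0 wnF degw; apply/eqP.
rewrite -eqp_monic ?monic_minPoly ?monicXnsubC // -dvdp_size_eqp.
  by rewrite size_minPoly size_XnsubC // degw.
exact: minPoly_dvdp_XnsubC.
Qed.

Lemma adjoin_degree_subv F1 F2 w n : (F1 <= F2)%VS -> (0 < n)%N ->
  w ^+ n \in F1 -> adjoin_degree F2 w = n -> adjoin_degree F1 w = n.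
Proof.
move=> sF12 n_gt0 wnF1 deg2; apply/eqP; rewrite eqn_leq adjoin_degree_leq_exp //=.
have := dvdp_leq _ (minPolyS w sF12).
by rewrite !size_minPoly -deg2 ltnS; apply; rewrite monic_neq0 ?monic_minPoly.
Qed.

Variables (q : nat) (z : L).
Hypothesis prim_z : q.-primitive_root z.

Let q_gt0 := prim_order_gt0 prim_z.

Lemma adjoin_degree_prim_root_lt F : (1 < q)%N -> (adjoin_degree F z < q)%N.
Proof.
move=> q_gt1; pose Phi := \poly_(i < q) (1 : L).
have size_Phi : size Phi = q by rewrite size_poly_eq // oner_eq0.
have z_neq1 : z != 1.
  by rewrite -[z]expr1 -(expr0 z) (eq_prim_root_expr prim_z) !modn_small.
have : root Phi z.
  rewrite rootE horner_poly; under eq_bigr do rewrite mul1r.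
  have /eqP := subrX1 z q; rewrite (prim_expr_order prim_z) subrr eq_sym.
  by rewrite mulf_eq0 subr_eq0 (negbTE z_neq1).
move/(minPoly_dvdp (polyOver_poly (fun i _ => mem1v F)))/dvdp_leq.
rewrite size_minPoly size_Phi; apply.
by rewrite -size_poly_eq0 size_Phi -lt0n ltnW.
Qed.

Lemma prod_XsubC_prim_root w : w != 0 ->
  \prod_(i <- iota 0 q) ('X - (z ^+ i * w)%:P) = 'X^q - (w ^+ q)%:P.
Proof.
move=> w_neq0; rewrite -(big_map (fun i => z ^+ i * w) xpredT (fun x => 'X - x%:P)).
rewrite [RHS](@all_roots_prod_XsubC _ _ [seq z ^+ i * w | i <- iota 0 q]).
- by rewrite (monicP (monicXnsubC _ q_gt0)) scale1r.
- by rewrite size_XnsubC // size_map size_iota.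
- apply/allP=> _ /mapP[i _ ->] /=; rewrite rootE !hornerE.
  by rewrite exprMn exprAC (prim_expr_order prim_z) expr1n mul1r subrr.
rewrite uniq_rootsE map_inj_in_uniq ?iota_uniq // => i j.
rewrite !mem_iota !add0n => /andP[_ ltiq] /andP[_ ltjq] /(mulIf w_neq0) /eqP.
by rewrite (eq_prim_root_expr prim_z) !modn_small // => /eqP.
Qed.

(* The constant coefficient of minPoly F w is, up to sign, a product of
   adjoin_degree F w conjugates z ^+ i * w of w. *)
Lemma prim_root_expr_adjoin_degree F w : w ^+ q \in F ->
  exists s, z ^+ s * w ^+ adjoin_degree F w \in F.
Proof.
move=> wqF; have [->|w_neq0] := eqVneq w 0.
  by exists 0%N; rewrite adjoin0_deg expr1 mulr0 rpred0.
have := minPoly_dvdp_XnsubC wqF; rewrite -(prod_XsubC_prim_root w_neq0).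
case/dvdp_prod_XsubC=> m Dm; set r := mask m (iota 0 q) in Dm.
have {}Dm : minPoly F w = \prod_(i <- r) ('X - (z ^+ i * w)%:P).
  by apply/eqP; rewrite -eqp_monic ?monic_minPoly ?monic_prod_XsubC.
have size_r : size r = adjoin_degree F w.
  by apply/eqP; rewrite -eqSS -(size_prod_XsubC r (fun i => z ^+ i * w)) -Dm size_minPoly.
have : (minPoly F w)`_0 \in F by apply/polyOverP/minPolyOver.
rewrite -horner_coef0 Dm horner_prod -size_r.
under eq_bigr do rewrite hornerXsubC sub0r -mulN1r.
rewrite big_split /= big_split /= prodrXr !big_const_seq !count_predT !iter_mulr_1.
rewrite fpredMl ?rpredX ?rpredN1 ?expf_neq0 ?oppr_eq0 ?oner_eq0 //.
by exists (\sum_(i <- r) i)%N.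
Qed.

Lemma adjoin_degree_Kummer F w : prime q -> z \in F -> w ^+ q \in F ->
  (forall c, c \in F -> c ^+ q != w ^+ q) -> adjoin_degree F w = q.
Proof.
move=> q_prime zF wqF no_root; set k := adjoin_degree F w.
have wkF : w ^+ k \in F.
  have [s] := prim_root_expr_adjoin_degree wqF.
  have zs_neq0 : z ^+ s != 0 by rewrite expf_neq0 // (prim_root_eq0 prim_z) -lt0n.
  by rewrite fpredMl // rpredX.
have k_gt0 : (0 < k)%N by [].
have [//|k_neq_q] := eqVneq k q; have k_lt_q : (k < q)%N.
  by rewrite ltn_neqAle k_neq_q adjoin_degree_leq_exp.
have co_kq : coprime k q.
  rewrite coprime_sym prime_coprime //; apply/negP => /(dvdn_leq k_gt0).
  by rewrite leqNgt k_lt_q.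
case: (egcdnP q k_gt0) => u v Dkq _; rewrite (eqnP co_kq) in Dkq.
have w_neq0 : w != 0 by apply: contraNneq (no_root 0 (rpred0 F)) => ->.
have : w \in F.
  have -> : w = (w ^+ k) ^+ u / (w ^+ q) ^+ v.
    by rewrite -!exprM mulnC Dkq addn1 exprS mulnC mulfK // expf_neq0.
  by rewrite rpred_div // rpredX.
by move/no_root; rewrite eqxx.
Qed.

(* If P is the polynomial of degree < q over F with u = P.[w], then the
   conjugate P.[z * w] of u is z ^+ r * u for some r; comparing coefficients
   leaves only the monomial of degree r in P. *)
Lemma Kummer_radical F w u : z \in F -> w ^+ q \in F -> adjoin_degree F w = q ->
  u \in <<F; w>>%VS -> u ^+ q \in F ->
  exists2 c, c \in F & exists2 r, (r < q)%N & u = c * w ^+ r.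
Proof.
move=> zF wqF degw uFw uqF.
have [->|u_neq0] := eqVneq u 0; first by exists 0; [exact: rpred0 | exists 0%N; rewrite ?mul0r].
pose P := Fadjoin_poly F w u.
have PF : P \is a polyOver F by exact: Fadjoin_polyOver.
have size_P : (size P <= q)%N by rewrite -degw size_Fadjoin_poly.
have Pw : P.[w] = u := Fadjoin_poly_eq uFw.
have Pzw_q : P.[z * w] ^+ q = u ^+ q.
  have /root_dvdp : minPoly F w %| P ^+ q - (u ^+ q)%:P.
    apply: minPoly_dvdp; first by rewrite rpredB ?rpredX ?polyOverC.
    by rewrite rootE !hornerE Pw subrr.
  move/(_ (z * w)); rewrite (minPoly_XnsubC q_gt0 wqF degw) !rootE !hornerE.
  by rewrite exprMn (prim_expr_order prim_z) mul1r subrr eqxx => /(_ isT) /eqP /subr0_eq.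
have [r Dr] : {r : 'I_q | P.[z * w] / u = z ^+ r}.
  by apply: (prim_rootP prim_z); rewrite expr_div_n Pzw_q divff // expf_neq0.
pose D := \poly_(i < q) (P`_i * (z ^+ i - z ^+ r)).
have D_eq0 : D = 0.
  apply/eqP; rewrite -(root_small_adjoin_poly (K := F) (x := w)) ?degw ?size_poly //.
    rewrite rootE horner_poly.
    have -> : \sum_(i < q) P`_i * (z ^+ i - z ^+ r) * w ^+ i = P.[z * w] - z ^+ r * P.[w].
      rewrite !(horner_coef_wide _ size_P) mulr_sumr -sumrB.
      by apply: eq_bigr => i _; rewrite exprMn; ring.
    by rewrite -Dr Pw divfK // subrr.
  apply/polyOver_poly => i _.
  by rewrite rpredM ?rpredB ?rpredX //; apply/polyOverP.
exists P`_r; first exact/polyOverP.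
exists r => //; rewrite -Pw (horner_coef_wide _ size_P) (bigD1 r) //=.
rewrite big1 ?addr0 // => i /negbTE i_neq_r.
have /eqP := congr1 (fun p : {poly L} => p`_i) D_eq0.
rewrite coef_poly ltn_ord coef0 mulf_eq0 subr_eq0 (eq_prim_root_expr prim_z).
by rewrite !modn_small ?ltn_ord // (inj_eq val_inj) i_neq_r orbF => /eqP->; rewrite mul0r.
Qed.

End Kummer.

Section RationalKummer.
Local Open Scope ring_scope.

Lemma rat_expr_dvdn_logn (x : rat) (n M p : nat) : (0 < M)%N ->
  x ^+ n = M%:R -> (n %| logn p M)%N.
Proof.
move=> M_gt0 xnM.
have /(congr1 absz) : numq x ^+ n = M%:Z * denq x ^+ n.
  by apply: (@intr_inj rat); rewrite rmorphXn rmorphM /= numqE exprMn xnM rmorphXn.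
rewrite abszX abszM abszX /= => /(congr1 (logn p)).
rewrite lognX lognM ?expn_gt0 ?absz_gt0 ?denq_neq0 // lognX => Dlog.
by rewrite -(dvdn_addl _ (dvdn_mulr (logn p `|denq x|) (dvdnn n))) -Dlog dvdn_mulr.
Qed.

Variables (L : fieldExtType rat) (q : nat) (z : L).
Hypotheses (q_prime : prime q) (prim_z : q.-primitive_root z).

Let q_gt1 := prime_gt1 q_prime.

(* The invariant of the tower Q(z) < Q(z, p1^(1/q)) < Q(z, p1^(1/q), p2^(1/q))
   < ..., for primes p1 < p2 < ..., with b the last prime adjoined. *)
Definition no_qth_root_above (F : {subfield L}) (b : nat) :=
  forall N p : nat, (0 < N)%N -> prime p -> (b < p)%N -> ~~ (q %| logn p N)%N ->
  forall u, u \in F -> u ^+ q != N%:R.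

(* A q-th root u of N in Q(z) has degree k < q, and a power z ^+ s * u ^+ k
   of it is rational, which forces q %| k * logn p N. *)
Lemma no_qth_root_above_prim_root : no_qth_root_above <<1; z>>%AS 0.
Proof.
move=> N p N_gt0 p_prime _ q_ndvd u uQz; apply/eqP => uqN.
have [s] : exists s, z ^+ s * u ^+ adjoin_degree 1%AS u \in 1%VS.
  by apply: (prim_root_expr_adjoin_degree prim_z); rewrite uqN rpredMn ?mem1v.
set k := adjoin_degree 1%AS u => /vlineP[x Dx].
have k_lt_q : (k < q)%N.
  apply: leq_ltn_trans (adjoin_degree_prim_root_lt prim_z _ q_gt1).
  have := dimvS (_ : (<<1; u>> <= <<1; z>>)%VS).
  by rewrite !dim_Fadjoin dimv1 !muln1; apply; rewrite sub_adjoin1v.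
have : x ^+ q = (N ^ k)%:R.
  apply: (fmorph_inj (in_alg L)); rewrite rmorphXn /= scaler_nat natrX -Dx.
  rewrite exprMn -!exprM mulnC exprM (prim_expr_order prim_z) expr1n mul1r.
  by rewrite mulnC exprM uqN.
move/rat_expr_dvdn_logn => /(_ p); rewrite expn_gt0 N_gt0 lognX => /(_ isT).
rewrite Gauss_dvdr ?(negbTE q_ndvd) // prime_coprime //.
by apply: contraTN k_lt_q => /(dvdn_leq (isT : (0 < k)%N)); rewrite -leqNgt.
Qed.

(* A q-th root of N in F(p^(1/q)) has the form c * w ^+ r with c in F, so
   c * p would be a q-th root in F of N * p ^ (q - r). *)
Lemma no_qth_root_above_adjoin F b w p : no_qth_root_above F b -> z \in F ->
  prime p -> (b < p)%N -> w ^+ q = p%:R ->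
  no_qth_root_above <<F; w>>%AS p /\ \dim <<F; w>> = (q * \dim F)%N.
Proof.
move=> noF zF p_prime b_lt_p wqp; have p_gt0 := prime_gt0 p_prime.
have wqF : w ^+ q \in F by rewrite wqp rpredMn ?mem1v.
have degw : adjoin_degree F w = q.
  apply: (adjoin_degree_Kummer prim_z) => // c cF; rewrite wqp.
  by apply: (noF p p) cF; rewrite // logn_prime // eqxx dvdn1 gtn_eqF.
split; last by rewrite dim_Fadjoin degw.
move=> N p' N_gt0 p'_prime p_lt_p' q_ndvd u uFw; apply/eqP => uqN.
have uqF : u ^+ q \in F by rewrite uqN rpredMn ?mem1v.
have [c cF [r r_lt_q Du]] := Kummer_radical prim_z zF wqF degw uFw uqF.
have Np_gt0 : (0 < N * p ^ (q - r))%N by rewrite muln_gt0 N_gt0 expn_gt0 p_gt0.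
have Np_ndvd : ~~ (q %| logn p' (N * p ^ (q - r)))%N.
  by rewrite lognM ?expn_gt0 ?p_gt0 // lognX (logn_prime _ p_prime) gtn_eqF // muln0 addn0.
have cpF : c * p%:R \in F by rewrite rpredM ?rpredMn ?mem1v.
have := noF _ _ Np_gt0 p'_prime (ltn_trans b_lt_p p_lt_p') Np_ndvd _ cpF.
rewrite natrM natrX -uqN Du !exprMn exprAC wqp -mulrA -exprD subnKC ?eqxx //.
exact: ltnW.
Qed.

Lemma exists_prime_not_qth_power : exists2 p, prime p & forall u : L, u ^+ q != p%:R.
Proof.
apply: NNPP => no_p.
have qth_root p : prime p -> exists w : L, w ^+ q = p%:R.
  move=> p_prime; apply: NNPP => no_w; apply: no_p; exists p => // u.
  by apply/eqP => uqp; apply: no_w; exists u.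
have tower j : exists F b, [/\ no_qth_root_above F b, z \in F & (q ^ j <= \dim F)%N].
  elim: j => [|j [F [b [noF zF dimF]]]].
    exists <<1; z>>%AS, 0%N; split; last by rewrite adim_gt0.
      exact: no_qth_root_above_prim_root.
    exact: memv_adjoin.
  have [p b_lt_p p_prime] := prime_above b; have [w wqp] := qth_root p p_prime.
  have [noFw dimFw] := no_qth_root_above_adjoin noF zF p_prime b_lt_p wqp.
  exists <<F; w>>%AS, p; split => //; first exact: subvP_adjoin.
  by rewrite dimFw expnS leq_mul.
have [F [_ [_ _ dimF]]] := tower (\dim {:L}).
have := leq_trans dimF (dimvS (subvf F)).
by rewrite leqNgt ltn_expl.
Qed.

End RationalKummer.

Section Extensions.
Local Open Scope ring_scope.

Lemma exists_irreducible_dvdp (F : fieldType) (f : {poly F}) :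
  (1 < size f)%N -> exists2 g, irreducible_poly g & g %| f.
Proof.
have [n] := ubnP (size f); elim: n f => // n IHn f /ltnSE size_f f_gt1.
apply: NNPP => no_g; apply: (no_g); exists f => //; split=> // d d_neq1 dvd_df.
apply: contraPT no_g => ndf; have f_neq0 : f != 0 by rewrite -size_poly_eq0 -lt0n ltnW.
have d_neq0 : d != 0 by apply: contraTneq dvd_df => ->; rewrite dvd0p.
have size_d : (size d < size f)%N by rewrite ltn_neqAle dvdp_size_eqp // ndf dvdp_leq.
have d_gt1 : (1 < size d)%N by rewrite ltn_neqAle eq_sym d_neq1 lt0n size_poly_eq0.
have [g irr_g dvd_gd] := IHn d (leq_trans size_d size_f) d_gt1.
by apply; exists g => //; apply: dvdp_trans dvd_df.
Qed.

Section BaseFieldEmbedding.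
Variables (F0 : fieldType) (F : fieldExtType F0) (L : fieldExtType F).

Definition base_in_alg (x : F) : baseFieldType L := in_alg L x.

Fact base_in_alg_is_linear : linear base_in_alg.
Proof.
by move=> a x y; rewrite /base_in_alg -[in LHS]mulr_algl rmorphD rmorphM /= mulr_algl.
Qed.

HB.instance Definition _ :=
  GRing.isLinear.Build F0 F (baseFieldType L) _ base_in_alg base_in_alg_is_linear.

Fact base_in_alg_ahom : ahom_in {:F} (linfun base_in_alg).
Proof.
by apply/ahom_inP; split=> [x y _ _|]; rewrite !lfunE /= /base_in_alg (rmorphM, rmorph1).
Qed.

Definition base_in_ahom : 'AHom(F, baseFieldType L) := AHom base_in_alg_ahom.

Lemma base_in_ahomE x : base_in_ahom x = in_alg L x.
Proof. by rewrite /= lfunE. Qed.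

End BaseFieldEmbedding.

Lemma exists_ext_root (F0 : fieldType) (E : fieldExtType F0) (f : {poly E}) :
  (1 < size f)%N ->
  exists (E' : fieldExtType F0) (phi : 'AHom(E, E')) (x : E'), root (map_poly phi f) x.
Proof.
case/exists_irreducible_dvdp=> g irr_g dvd_gf.
have [L _ [x gx _]] := irredp_FAdjoin irr_g.
exists (baseFieldType L), (base_in_ahom L), x.
have -> : map_poly (base_in_ahom L) f = map_poly (in_alg L) f.
  by apply: eq_map_poly => y; rewrite base_in_ahomE.
by apply: root_dvdp gx; rewrite dvdp_map.
Qed.

Lemma sum_expr_eq0_prim_root (R : nzRingType) q (z : R) : prime q -> q%:R != 0 :> R ->
  \sum_(i < q) z ^+ i = 0 -> q.-primitive_root z.
Proof.
move=> q_prime q_neq0 sum_z.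
have zq : z ^+ q = 1 by apply/eqP; rewrite -subr_eq0 subrX1 sum_z mulr0.
have z_neq1 : z != 1.
  apply: contra_neq q_neq0 => z1; rewrite -sum_z z1.
  by under eq_bigr do rewrite expr1n; rewrite sumr_const card_ord.
have [m prim_m m_dvd_q] := prim_order_exists (prime_gt0 q_prime) zq.
case/primeP: q_prime => _ /(_ m m_dvd_q) /orP[/eqP m1|/eqP <-] //.
by move: (prim_expr_order prim_m); rewrite m1 expr1 => /eqP; rewrite (negbTE z_neq1).
Qed.

Lemma exists_radical_ext (K : fieldExtType rat) (E : fieldExtType K) q : prime q ->
  exists (E' : fieldExtType K) (phi : 'AHom(E, E')) (w : E'),
    w ^+ q \in 1%VS /\ adjoin_degree (phi @: {:E})%AS w = q.
Proof.
move=> q_prime; have q_gt0 := prime_gt0 q_prime.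
pose Phi := \poly_(i < q) (1 : E).
have [Ez [iota [z]]] : exists (Ez : fieldExtType K) (iota : 'AHom(E, Ez)) (z : Ez),
    root (map_poly iota Phi) z.
  by apply: exists_ext_root; rewrite size_poly_eq ?oner_eq0 ?prime_gt1.
have -> : map_poly iota Phi = \poly_(i < q) 1.
  apply/polyP => i; rewrite coef_map !coef_poly.
  by case: ifP => _; [exact: rmorph1 | exact: raddf0].
rewrite rootE horner_poly; under eq_bigr do rewrite mul1r; move/eqP => sum_z.
have prim_z : q.-primitive_root z.
  apply: sum_expr_eq0_prim_root sum_z => //.
  by rewrite -(rmorph_nat (in_alg Ez)) -(rmorph_nat (in_alg K)) !fmorph_eq0 pnatr_eq0 -lt0n.
have [p p_prime p_not_root] := exists_prime_not_qth_power (L := baseFieldType Ez) q_prime prim_z.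
have [E' [iota' [w]]] : exists (E' : fieldExtType K) (iota' : 'AHom(Ez, E')) (w : E'),
    root (map_poly iota' ('X^q - (p%:R)%:P)) w.
  by apply: exists_ext_root; rewrite size_XnsubC.
rewrite rmorphB /= map_polyXn map_polyC /= rmorph_nat rootE !hornerE subr_eq0 => /eqP wqp.
have wq1 : w ^+ q \in 1%VS by rewrite wqp rpredMn ?mem1v.
exists E', (iota' \o iota)%AF, w; split => //.
apply: (adjoin_degree_subv (F2 := (iota' @: {:Ez})%AS) _ q_gt0).
- by rewrite /= limg_comp limgS ?subvf.
- exact: subvP (sub1v _) _ wq1.
apply: (adjoin_degree_Kummer (z := iota' z)); rewrite ?fmorph_primitive_root ?memv_img ?memvf //.
- exact: subvP (sub1v _) _ wq1.
move=> _ /memv_imgP[c _ ->]; rewrite wqp -(rmorph_nat iota') -rmorphXn (inj_eq (fmorph_inj _)).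
exact: p_not_root.
Qed.

Lemma exists_radical_tower (K : fieldExtType rat) (E : fieldExtType K) (qs : seq nat) :
  all prime qs -> exists (E' : fieldExtType K) (phi : 'AHom(E, E')) (ws : seq E'),
    size ws = size qs /\ forall (F : {subfield E'}) (m : bitseq), (F <= phi @: {:E})%VS ->
    \dim <<F & mask m ws>> = (\prod_(q <- mask m qs) q * \dim F)%N.
Proof.
elim: qs E => [|q qs IHqs] E /=.
  exists E, (id_ahom E), [::]; split=> // F m _.
  by rewrite !mask0 Fadjoin_nil big_nil mul1n.
case/andP=> q_prime /IHqs IH; have [E1 [iota [w [wq1 degw]]]] := exists_radical_ext E q_prime.
have [E' [iota' [ws [size_ws dim_ws]]]] := IH E1.
exists E', (iota' \o iota)%AF, (iota' w :: ws); split=> [|F m]; first by rewrite /= size_ws.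
rewrite /= limg_comp => sF; have sF1 : (F <= iota' @: {:E1})%VS.
  by apply: subv_trans sF _; rewrite limgS ?subvf.
case: m => [|[] m] /=; last exact: dim_ws.
  by rewrite Fadjoin_nil big_nil mul1n.
have wqF : iota' w ^+ q \in F.
  by rewrite -rmorphXn (subvP (sub1v F)) // -(aimg1 iota') memv_img.
rewrite adjoin_cons dim_ws; last by apply/FadjoinP; rewrite memv_img ?memvf.
rewrite dim_Fadjoin big_cons mulnCA mulnA.
have q_gt0 := prime_gt0 q_prime.
by rewrite (adjoin_degree_subv (F2 := (iota' @: (iota @: {:E}))%AS) sF q_gt0) ?adjoin_degree_aimg.
Qed.

Lemma prodv_adjoin_seq (F0 : fieldType) (E : fieldExtType F0) (A B : {subfield E})
    (xs ys : seq E) :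
  (<<A & xs>> * <<B & ys>>)%VS = <<(A * B)%AS & xs ++ ys>>%VS.
Proof.
apply/eqP; rewrite eqEsubv; apply/andP; split; first apply: prodv_sub.
- apply/Fadjoin_seqP; split=> [|x xs_x]; last by rewrite seqv_sub_adjoin // mem_cat xs_x.
  exact: subv_trans (field_subvMr A B) (subv_adjoin_seq _ _).
- apply/Fadjoin_seqP; split=> [|y ys_y]; last by rewrite seqv_sub_adjoin // mem_cat ys_y orbT.
  exact: subv_trans (field_subvMl A B) (subv_adjoin_seq _ _).
apply/(@Fadjoin_seqP _ _ _ _ (<<A & xs>> * <<B & ys>>)%AS); split.
  by apply: prodvS; apply: subv_adjoin_seq.
move=> x; rewrite mem_cat => /orP[xs_x|ys_x].
  by rewrite -[x]mulr1 memv_mul ?mem1v ?seqv_sub_adjoin.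
by rewrite -[x]mul1r memv_mul ?mem1v ?seqv_sub_adjoin.
Qed.

Lemma dim_aimg (F0 : fieldType) (L L' : fieldExtType F0) (f : 'AHom(L, L')) (U : {vspace L}) :
  \dim (f @: U) = \dim U.
Proof. by rewrite limg_dim_eq // (eqP (AHom_lker0 f)) capv0. Qed.

Lemma exists_radical_compositum (K : fieldExtType rat) (E : fieldExtType K)
    (A B : {subfield E}) (s a b : nat) : (0 < s)%N -> (0 < a)%N -> (0 < b)%N ->
  exists (E' : fieldExtType K) (A' B' : {subfield E'}),
    [/\ \dim A' = (s * a * \dim A)%N, \dim B' = (s * b * \dim B)%N
      & \dim (A' * B')%AS = (s * a * b * \dim (A * B)%AS)%N].
Proof.
move=> /exists_prime_seq_prod[qs1 qs1_prime <-].
move=> /exists_prime_seq_prod[qs2 qs2_prime <-].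
move=> /exists_prime_seq_prod[qs3 qs3_prime <-].
have qs_prime : all prime (qs1 ++ qs2 ++ qs3) by rewrite !all_cat qs1_prime qs2_prime.
have [E' [phi [ws [size_ws dim_ws]]]] := exists_radical_tower E qs_prime.
have [ws1 [ws2 [ws3 [Dws [size1 size2 size3]]]]] : exists ws1 ws2 ws3,
    ws = ws1 ++ ws2 ++ ws3 /\ [/\ size ws1 = size qs1, size ws2 = size qs2 & size ws3 = size qs3].
  exists (take (size qs1) ws), (take (size qs2) (drop (size qs1) ws)),
    (drop (size qs2) (drop (size qs1) ws)); rewrite !cat_take_drop.
  by split=> //; split; rewrite ?size_takel ?size_drop ?size_ws ?size_cat ?addKn ?leq_addr.
pose m b2 b3 := nseq (size qs1) true ++ nseq (size qs2) b2 ++ nseq (size qs3) b3.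
have mask_m b2 b3 T (s1 s2 s3 : seq T) :
    size s1 = size qs1 -> size s2 = size qs2 -> size s3 = size qs3 ->
    mask (m b2 b3) (s1 ++ s2 ++ s3) = s1 ++ (if b2 then s2 else [::]) ++ (if b3 then s3 else [::]).
  rewrite /m => <- <- <-; rewrite !mask_cat ?size_nseq // mask_true //.
  by case: b2; case: b3; rewrite ?mask_true ?mask_false.
have dim_ws_m (F : {subfield E}) b2 b3 :
    \dim <<(phi @: F)%AS & mask (m b2 b3) ws>> =
    (\prod_(q <- mask (m b2 b3) (qs1 ++ qs2 ++ qs3)) q * \dim F)%N.
  by rewrite dim_ws ?dim_aimg ?limgS ?subvf.
exists E', <<(phi @: A)%AS & ws1 ++ ws2>>%AS, <<(phi @: B)%AS & ws1 ++ ws3>>%AS; split.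
- by have := dim_ws_m A true false; rewrite Dws !mask_m // !cats0 !big_cat => <-.
- by have := dim_ws_m B false true; rewrite Dws !mask_m // !big_cat => <-.
have := dim_ws_m (A * B)%AS true true; rewrite Dws !mask_m // !big_cat /= mulnA => <-.
rewrite prodv_adjoin_seq /= aimgM; congr (\dim _); apply/eqP; rewrite eqEsubv.
by rewrite !adjoin_seqSr // => x; rewrite !mem_cat; do !case: (x \in _).
Qed.

End Extensions.

Lemma compositum_feasible111 (K : fieldType) : compositum_feasible K 1 1 1.
Proof. by exists K^o, 1%AS, 1%AS; rewrite /= prodv1 dimv1. Qed.

Lemma compositum_feasibleM_Cprime (K : fieldExtType rat) a b c a' b' c' :
  Cprime a b c -> compositum_feasible K a' b' c' ->
  compositum_feasible K (a * a') (b * b') (c * c').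
Proof.
case/CprimeP=> s [a1 [b1 [[s_gt0 a1_gt0 b1_gt0] [-> -> ->]]]].
case=> E [L [L' [<- <- <-]]].
have [E' [A [B dimAB]]] := exists_radical_compositum L L' s_gt0 a1_gt0 b1_gt0.
by exists E', A, B.
Qed.

Theorem mainTheorem11 (K : fieldExtType rat) :
  (forall a b c a' b' c' : nat,
      compositum_feasible K a b c -> compositum_feasible K a' b' c' ->
      Cprime a b c ->
      compositum_feasible K (a * a') (b * b') (c * c'))
  /\ (forall a b c : nat, Cprime a b c -> compositum_feasible K a b c)
  /\ Cprime 1 1 1
  /\ (forall a b c a' b' c' : nat,
        Cprime a b c -> Cprime a' b' c' -> Cprime (a * a') (b * b') (c * c'))
  /\ (forall a b c n : nat, Cprime a b c -> Cprime (a ^ n) (b ^ n) (c ^ n)).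
Proof.
split; first by move=> a b c a' b' c' _ feas' Cabc; apply: compositum_feasibleM_Cprime.
split.
  move=> a b c Cabc; rewrite -[a]muln1 -[b]muln1 -[c]muln1.
  exact: compositum_feasibleM_Cprime Cabc (compositum_feasible111 K).
split; first exact: Cprime111.
split; first exact: CprimeM.
exact: CprimeX.
Qed.
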